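(* Let $k=n/m$ with $n,m$ coprime positive integers, let $q_c$ be an exponential factor all of whose exponents are $>k$, let $r=\mathrm{ram}(q_c)$, let $a,\hat a\in\mathbb C$, and let $b,\hat b$ be exponential factors of slope $<k$. Put $q=q_c+ax^k+b$ and $\hat q=q_c+\hat ax^k+\hat b$. Then $\langle q\rangle\neq\langle\hat q\rangle$ and $f_{q,\hat q}=k$ if and only if one of the following holds: (1) $m$ divides $r$ and $a\neq\hat a$; (2) $m$ does not divide $r$ and either (2a) exactly one of $a,\hat a$ is zero, or (2b) $a\ne0$, $\hat a\ne0$ and $a^N\neq\hat a^N$, where $N=\mathrm{lcm}(r,m)/r$. (Equivalently, in case (2), $a^N\ne\hat a^N$.)
   Context: Exponential factors: finite sums $q=\sum_ka_kx^k$, $a_k\in\mathbb C$, $k\in\mathbb Q_{>0}$; $E(q)$ = set of exponents with $a_k\ne0$; $\mathrm{slope}(q)=\max E(q)$ ($0$ if $q=0$); $\mathrm{ram}(q)$ = least $r\ge1$ with $q\in x^{1/r}\mathbb C[x^{1/r}]$. Galois operator $\sigma(\sum a_kx^k)=\sum a_ke^{-2\pi\sqrt{-1}k}x^k$; Stokes circle $\langle q\rangle=\{\sigma^i(q):i\in\mathbb Z\}$. Truncation $\tau_k(\sum a_{k'}x^{k'})=\sum_{k'\ge k}a_{k'}x^{k'}$. Common part/fission exponent: for $q,\hat q$ in distinct orbits, if some $k'\in E(q)$ has $\langle\tau_{k'}(q)\rangle=\langle\tau_{k'}(\hat q)\rangle$, let $k'$ be the smallest, and put $q_c'=\tau_{k'}(q)$,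 $\hat q_c'=\tau_{k'}(\hat q)$; else $q_c'=\hat q_c'=0$. The fission exponent is $f_{q,\hat q}=\max(\mathrm{slope}(q-q_c'),\mathrm{slope}(\hat q-\hat q_c'))$. *)

From Stdlib Require Reals.
From mathcomp Require Import all_boot all_order all_algebra.
From mathcomp Require Import boolp.
From mathcomp Require Import Rstruct.
From mathcomp.real_closed Require Export complex.
Set Implicit Arguments. Unset Strict Implicit. Unset Printing Implicit Defensive.
Import Order.TTheory GRing.Theory Num.Theory.
Local Open Scope ring_scope.

Notation C := (Rdefinitions.R)[i].

(* An exponential factor is a finite formal sum  sum_j a_j x^(k_j), given as the
   list of its terms (k_j, a_j); exponents must be positive rationals (ef_ok).
   Two exponential factors are equal when their coefficient functions agree. *)
Definition EF := seq (rat * C).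

Definition ef_ok (q : EF) : bool := all (fun p => 0 < p.1) q.

Definition coef (q : EF) (e : rat) : C := \sum_(p <- q | p.1 == e) p.2.

Definition inExps (q : EF) (e : rat) : bool := coef q e != 0.

(* slope(q) = max E(q), 0 if E(q) is empty (exponents are positive) *)
Definition slope (q : EF) : rat := \big[Num.max/0]_(p <- q | inExps q p.1) p.1.

(* q belongs to x^(1/r) C[x^(1/r)] *)
Definition in_ring_r (q : EF) (r : nat) : Prop :=
  forall e, inExps q e -> exists j : nat, (0 < j)%N /\ e = j%:R / r%:R.

Definition is_ram (q : EF) (r : nat) : Prop :=
  [/\ (0 < r)%N, in_ring_r q r &
      forall r', (0 < r')%N -> in_ring_r q r' -> (r <= r')%N].

Definition eminus (e : rat) : C :=
  Complex (Rtrigo_def.cos (2 * Rtrigo1.PI * ratr e)) (- Rtrigo_def.sin (2 * Rtrigo1.PI * ratr e)).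
Definition eplus (e : rat) : C :=
  Complex (Rtrigo_def.cos (2 * Rtrigo1.PI * ratr e)) (Rtrigo_def.sin (2 * Rtrigo1.PI * ratr e)).

Definition sigma (f : rat -> C) : rat -> C := fun e => f e * eminus e.
Definition sigma_inv (f : rat -> C) : rat -> C := fun e => f e * eplus e.

Definition sigmaz (i : int) (f : rat -> C) : rat -> C :=
  match i with
  | Posz n => iter n sigma f
  | Negz n => iter n.+1 sigma_inv f
  end.

Definition circle (q : EF) : (rat -> C) -> Prop :=
  fun f => exists i : int, f = sigmaz i (coef q).

Definition trunc (k : rat) (q : EF) : EF := [seq p <- q | k <= p.1].

Definition subEF (q q' : EF) : EF := q ++ [seq (p.1, - p.2) | p <- q'].

Definition common_exps (q qh : EF) : seq rat :=
  [seq p.1 | p <- q & inExps q p.1 &&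
     `[< circle (trunc p.1 q) = circle (trunc p.1 qh) >] ].

Definition fission (q qh : EF) : rat :=
  match common_exps q qh with
  | [::] => Num.max (slope q) (slope qh)
  | k0 :: _ =>
      let k' := \big[Num.min/k0]_(x <- common_exps q qh) x in
      Num.max (slope (subEF q (trunc k' q))) (slope (subEF qh (trunc k' qh)))
  end.

(* A rotation sigma^i carrying the part of q above k onto that of qh must fix qc,
   so r divides i by minimality of the ramification; it then multiplies the
   coefficient of x^k by exp(-2 pi sqrt(-1) i k), an N-th root of unity, and every
   N-th root of unity arises this way from some i = j r.  Hence, when a != 0, the
   truncations of q and qh at k lie on a common Stokes circle iff a^N = ah^N.  If
   a^N = ah^N the fission exponent therefore drops below k; otherwise every common
   truncation exponent is an exponent of qc, hence > k, and the fission exponent is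
   k, the slope of the parts of q and qh below the first common exponent.  Since
   N = 1 exactly when m | r, the condition a^N != ah^N unfolds to (1)-(2b). *)

From mathcomp Require Import all_boot all_order all_algebra.
From mathcomp Require Import boolp Rstruct.
From mathcomp.real_closed Require Import complex.
From mathcomp Require Import ring lra zify.
Set Implicit Arguments. Unset Strict Implicit. Unset Printing Implicit Defensive.
Import Order.TTheory GRing.Theory Num.Theory.
Local Open Scope ring_scope.

Local Notation R := Rdefinitions.R.
Local Notation PI := Rtrigo1.PI.
Local Notation cos := Rtrigo_def.cos.

Lemma eminusD (x y : rat) : eminus (x + y) = eminus x * eminus y.
Proof.
rewrite /eminus rmorphD mulrDr cosD sinD /GRing.mul /=.
congr (Complex _ _); rewrite /GRing.mul /= ?RmultE ?RminusE ?RplusE.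
  by rewrite mulrNN.
by rewrite mulrN mulNr -opprD addrC.
Qed.

Lemma eminus0 : eminus 0 = 1.
Proof. by rewrite /eminus rmorph0 mulr0 Rtrigo_def.cos_0 Rtrigo_def.sin_0 oppr0. Qed.

Lemma IZR_two : Rdefinitions.IZR (BinNums.Zpos (BinNums.xO BinNums.xH)) = 2%:R :> R.
Proof. by rewrite IZRposE INRE. Qed.

Lemma eminus1 : eminus 1 = 1.
Proof. by rewrite /eminus rmorph1 mulr1 -IZR_two Rtrigo1.cos_2PI Rtrigo1.sin_2PI oppr0. Qed.

Lemma eminusN (x : rat) : eminus (- x) * eminus x = 1.
Proof. by rewrite -eminusD addNr eminus0. Qed.

Lemma eplusE (x : rat) : eplus x = eminus (- x).
Proof. by rewrite /eplus /eminus rmorphN mulrN Rtrigo1.cos_neg Rtrigo1.sin_neg opprK. Qed.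

Lemma eminusMn (j : nat) (x : rat) : eminus (j%:R * x) = eminus x ^+ j.
Proof.
elim: j => [|j IHj]; first by rewrite mul0r eminus0 expr0.
by rewrite -addn1 natrD mulrDl mul1r eminusD IHj exprD expr1.
Qed.

Lemma eminus_int (z : int) : eminus z%:~R = 1.
Proof.
have eminus_nat j : eminus j%:R = 1 by rewrite -[j%:R]mulr1 eminusMn eminus1 expr1n.
case: z => j; first by rewrite -pmulrn eminus_nat.
by have := eminusN j.+1%:R; rewrite eminus_nat mulr1 NegzE mulrNz -pmulrn.
Qed.

(* Reduce to [0 <= y < 1]: then [sin (2 pi y) = 0] forces [y = 0] or [y = 1/2],
   and [cos (2 pi y) = 1] rules out [y = 1/2]. *)
Lemma eminus_eq1P (x : rat) : eminus x = 1 <-> exists z : int, x = z%:~R.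
Proof.
split=> [ex1|[z ->]]; last exact: eminus_int.
exists (Num.floor x); apply/eqP; rewrite -subr_eq0.
set y := x - _.
have ey1 : eminus y = 1 by rewrite /y eminusD -mulrNz eminus_int ex1 mulr1.
have /andP[y0 y1] : (0 <= y) && (y < 1).
  have /andP[fl lt] := floor_itv x.
  by rewrite /y subr_ge0 fl ltrBlDl; rewrite intrD in lt.
move: ey1; rewrite /eminus; set t := 2 * PI * ratr y => -[cos_t].
move=> /eqP; rewrite oppr_eq0 => /eqP sin_t.
have PI_gt0 : 0 < PI by have /RltP := Rtrigo1.PI_RGT_0.
have ry0 : 0 <= ratr y :> R by rewrite ler0q.
have ry1 : ratr y < 1 :> R by rewrite -(rmorph1 (@ratr R)) ltr_rat.
have t_ge0 : 0 <= t by rewrite /t mulr_ge0 // mulr_ge0 // ltW.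
have t_lt : t < 2 * PI by rewrite /t gtr_pMr // mulr_gt0.
have [t0|[tPI|t2PI]] :=
  Rtrigo1.sin_eq_O_2PI_0 t (elimT RleP t_ge0) (elimT RleP (ltW t_lt)) sin_t.
- rewrite -(fmorph_eq0 (@ratr R)); move: t0.
  by rewrite /t => /eqP; rewrite mulf_eq0 (gt_eqF (mulr_gt0 _ PI_gt0)).
- have : cos PI = 1 by rewrite -tPI.
  by rewrite Rtrigo1.cos_PI => cos_PI; have : (-1 : R) = 1 := cos_PI; lra.
- by move: t_lt; rewrite t2PI IZR_two ltxx.
Qed.

Lemma sigmazE (i : int) (f : rat -> C) (e : rat) :
  sigmaz i f e = f e * eminus (i%:~R * e).
Proof.
have sigmaE j g : iter j sigma g e = g e * eminus e ^+ j.
  by elim: j => [|j IHj]; rewrite ?mulr1 // iterS /sigma IHj exprSr mulrA.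
have sigma_invE j g : iter j sigma_inv g e = g e * eplus e ^+ j.
  by elim: j => [|j IHj]; rewrite ?mulr1 // iterS /sigma_inv IHj exprSr mulrA.
case: i => j; rewrite /sigmaz; first by rewrite sigmaE -pmulrn eminusMn.
by rewrite sigma_invE eplusE NegzE mulrNz mulNr -mulrN -pmulrn eminusMn.
Qed.

Lemma sigmazD (i j : int) (f : rat -> C) : sigmaz i (sigmaz j f) = sigmaz (i + j) f.
Proof. by apply: funext => e; rewrite !sigmazE -mulrA -eminusD -mulrDl -intrD addrC. Qed.

Lemma circle_eqP (A B : EF) :
  circle A = circle B <-> exists i : int, coef B = sigmaz i (coef A).
Proof.
split=> [AB|[i BA]].
  have : circle B (coef B) by exists 0.
  by rewrite -AB => -[i ->]; exists i.
apply: funext => f; apply: propext; split=> -[j ->].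
  by exists (j - i); rewrite BA sigmazD addrNK.
by exists (j + i); rewrite BA sigmazD.
Qed.

Lemma coef_cons (p : rat * C) (L : EF) (e : rat) :
  coef (p :: L) e = (if p.1 == e then p.2 else 0) + coef L e.
Proof. by rewrite /coef big_cons; case: ifP; rewrite ?add0r. Qed.

Lemma coef_cat (L L' : EF) (e : rat) : coef (L ++ L') e = coef L e + coef L' e.
Proof. by rewrite /coef big_cat. Qed.

Lemma coef_trunc (t : rat) (L : EF) (e : rat) :
  coef (trunc t L) e = if t <= e then coef L e else 0.
Proof.
rewrite /coef big_filter_cond; case: ifP => te.
  by apply: eq_bigl => p; case: eqP => [->|]; rewrite ?te ?andbF.
by rewrite big_pred0 // => p; case: eqP => [->|]; rewrite ?te ?andbF.
Qed.

Lemma coef_sub (L L' : EF) (e : rat) : coef (subEF L L') e = coef L e - coef L' e.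
Proof. by rewrite /subEF coef_cat /coef big_map sumrN. Qed.

Lemma inExps_mem (q : EF) (e : rat) : inExps q e -> exists2 p, p \in q & p.1 = e.
Proof.
rewrite /inExps /coef; elim: q => [|p q IHq]; first by rewrite big_nil eqxx.
rewrite big_cons; case: (p.1 =P e) => [pe _|_]; first by exists p; rewrite ?mem_head.
by move=> /IHq[p' p'q <-]; exists p'; rewrite // in_cons p'q orbT.
Qed.

Lemma slope_ge0 (q : EF) : 0 <= slope q.
Proof. exact: bigmax_ge_id. Qed.

Lemma slope_ge (q : EF) (e : rat) : inExps q e -> e <= slope q.
Proof.
move=> qe; have [p pq pe] := inExps_mem qe; rewrite -pe in qe *.
exact: (le_bigmax_seq 0 p (fun p : rat * C => inExps q p.1) fst).
Qed.

Lemma slope_le (q : EF) (x : rat) :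
  0 <= x -> (forall e, inExps q e -> e <= x) -> slope q <= x.
Proof. by move=> x0 qx; apply: bigmax_le => // p; apply: qx. Qed.

Lemma slope_inExps (q : EF) : 0 < slope q -> inExps q (slope q).
Proof.
rewrite /slope; apply: (big_ind (fun y => 0 < y -> inExps q y)) => //.
by move=> y z Hy Hz; rewrite maxEle; case: ifP.
Qed.

Definition lower (t : rat) (q : EF) : EF := subEF q (trunc t q).

Lemma coef_lower (t : rat) (q : EF) (e : rat) :
  coef (lower t q) e = if e < t then coef q e else 0.
Proof. by rewrite coef_sub coef_trunc ltNge; case: ifP; rewrite ?subrr ?subr0. Qed.

Lemma slope_lower (t : rat) (q : EF) : slope (lower t q) < t \/ slope (lower t q) = 0.
Proof.
have [/slope_inExps|] := ltP 0 (slope (lower t q)).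
  by rewrite /inExps coef_lower; case: ifP => [? _|_]; [left | rewrite eqxx].
by right; apply/eqP; rewrite eq_le slope_ge0 andbT.
Qed.

Lemma max_slope_eq (A B : EF) (k : rat) : 0 < k ->
  (forall e, inExps A e -> e <= k) -> (forall e, inExps B e -> e <= k) ->
  inExps A k || inExps B k -> Num.max (slope A) (slope B) = k.
Proof.
move=> k0 Ak Bk ABk; apply/eqP; rewrite eq_le ge_max !slope_le ?(ltW k0) //=.
by case/orP: ABk => /slope_ge kAB; rewrite le_max kAB ?orbT.
Qed.

Lemma common_expsP (q qh : EF) (t : rat) :
  t \in common_exps q qh <-> inExps q t /\ circle (trunc t q) = circle (trunc t qh).
Proof.
split=> [|[qt tqh]].
  by case/mapP => p; rewrite mem_filter => /andP[/andP[qp /asboolP pqh] _] ->.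
have [p pq pt] := inExps_mem qt.
apply/mapP; exists p; rewrite ?pt // mem_filter pq andbT pt qt.
exact/asboolP.
Qed.

Lemma fission_cases (q qh : EF) :
  (common_exps q qh = [::] /\ fission q qh = Num.max (slope q) (slope qh)) \/
  exists t, [/\ t \in common_exps q qh, {in common_exps q qh, forall t', t <= t'} &
     fission q qh = Num.max (slope (lower t q)) (slope (lower t qh))].
Proof.
rewrite /fission; case: (common_exps q qh) => [|c0 cs]; [by left | right].
exists (\big[Num.min/c0]_(x <- c0 :: cs) x); split=> //.
- rewrite big_seq; apply: (big_ind (fun y => y \in c0 :: cs)); rewrite ?mem_head //.
  by move=> y z yc zc; rewrite minEle; case: ifP.
- by move=> t' t'c; apply: (ge_bigmin_seq c0 t' xpredT (fun x => x) t'c).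
Qed.

Lemma fission_lt (q qh : EF) (t k : rat) :
  0 < k -> t \in common_exps q qh -> t <= k -> fission q qh < k.
Proof.
move=> k0 tc tk; case: (fission_cases q qh) => [[c0] | [t' [_ t'min ->]]].
  by move: tc; rewrite c0.
have lower_lt X : slope (lower t' X) < k.
  case: (slope_lower t' X) => [lt|->] //.
  by apply: lt_le_trans lt (le_trans (t'min t tc) tk).
by rewrite gt_max !lower_lt.
Qed.

Lemma fission_eq (q qh : EF) (k : rat) : 0 < k ->
  {in common_exps q qh, forall t, k < t} ->
  (forall e, k < e -> inExps q e -> e \in common_exps q qh) ->
  (forall e, k < e -> inExps qh e -> e \in common_exps q qh) ->
  inExps q k || inExps qh k -> fission q qh = k.
Proof.
move=> k0 c_gt q_c qh_c qhk; case: (fission_cases q qh) => [[c0 ->] | [t [tc tmin ->]]].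
  have exps_le X (X_c : forall e, k < e -> inExps X e -> e \in common_exps q qh) e :
      inExps X e -> e <= k.
    by move=> Xe; rewrite leNgt; apply/negP => ke; move: (X_c e ke Xe); rewrite c0.
  exact: max_slope_eq k0 (exps_le _ q_c) (exps_le _ qh_c) qhk.
have kt := c_gt t tc.
have exps_le X (X_c : forall e, k < e -> inExps X e -> e \in common_exps q qh) e :
    inExps (lower t X) e -> e <= k.
  rewrite /inExps coef_lower; case: ifP => [et Xe|]; last by rewrite eqxx.
  rewrite leNgt; apply/negP => ke.
  by move: (tmin e (X_c e ke Xe)); rewrite leNgt et.
apply: max_slope_eq k0 (exps_le _ q_c) (exps_le _ qh_c) _.
by rewrite /inExps !coef_lower kt.
Qed.

Lemma fission_inExps (q qh : EF) :
  0 < fission q qh -> inExps q (fission q qh) || inExps qh (fission q qh).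
Proof.
case: (fission_cases q qh) => [[_ ->] | [t [_ _ ->]]]; rewrite maxEle.
  by case: ifP => _ /slope_inExps ->; rewrite ?orbT.
have lower_inExps X x : inExps (lower t X) x -> inExps X x.
  by rewrite /inExps coef_lower; case: ifP; rewrite ?eqxx.
by case: ifP => _ /slope_inExps /lower_inExps ->; rewrite ?orbT.
Qed.

(* An integer [i] with [i e] integral for all exponents [e] of [qc] puts [qc]
   in [x^(1/g) C[x^(1/g)]] for [g = gcd r i], so minimality of [r] forces [r | i]. *)
Lemma ram_dvdz (qc : EF) (r : nat) (i : int) : is_ram qc r ->
  (forall e, inExps qc e -> exists z : int, i%:~R * e = z%:~R) -> (r%:Z %| i)%Z.
Proof.
case=> r0 qc_r r_min i_int.
have [->|i0] := eqVneq i 0; first exact: dvdz0.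
pose g := gcdn r `|i|.
have g0 : (0 < g)%N by rewrite gcdn_gt0 r0.
suff rg : (r <= g)%N.
  have gr : (g <= r)%N by apply: dvdn_leq => //; exact: dvdn_gcdl.
  by apply/gcdn_idPl/eqP; rewrite -/g eqn_leq rg gr.
apply: r_min => // e qe.
have [j [j0 ej]] := qc_r e qe.
have [z ez] := i_int e qe.
have [u [v uv]] := Bezoutz r i.
have e_g : e * g%:R = (u * j%:Z + v * z)%:~R.
  have -> : (g%:R : rat) = (gcdz r i)%:~R by [].
  rewrite -uv !intrD !intrM -ez ej -!pmulrn.
  by field; rewrite pnatr_eq0 -lt0n.
have eg_gt0 : 0 < e * g%:R by rewrite mulr_gt0 ?ltr0n // ej divr_gt0 // ltr0n.
move: e_g eg_gt0; case: (u * j%:Z + v * z) => [w|w] e_g; rewrite e_g; last first.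
  by rewrite NegzE mulrNz oppr_gt0 -pmulrn ltrn0.
rewrite -pmulrn ltr0n => w0; exists w; split=> //.
by rewrite -[w%:R]/(w%:~R : rat) -e_g mulfK // pnatr_eq0 -lt0n.
Qed.

Lemma ram_twistP (qc : EF) (r : nat) (i : int) : is_ram qc r ->
  (forall e, inExps qc e -> eminus (i%:~R * e) = 1) <-> (r%:Z %| i)%Z.
Proof.
move=> qc_ram; split=> [twist1|/dvdzP[t ->] e qe].
  by apply: (ram_dvdz qc_ram) => e /twist1 /eminus_eq1P.
have [r0 qc_r _] := qc_ram; have [j [_ ->]] := qc_r e qe.
apply/eminus_eq1P; exists (t * j%:Z); rewrite !intrM -!pmulrn.
by field; rewrite pnatr_eq0 -lt0n.
Qed.

Lemma mem_unity_roots (F : idomainType) (d : nat) (s : seq F) (z : F) :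
  (0 < d)%N -> uniq s -> size s = d -> all (fun x => x ^+ d == 1) s -> z ^+ d = 1 ->
  z \in s.
Proof.
move=> d_gt0 s_uniq s_size s_roots zd; apply/negPn/negP => zs.
have Xd_neq0 : ('X^d - 1 : {poly F}) != 0 by rewrite -size_poly_eq0 size_XnsubC.
have roots : all (root ('X^d - 1)) (z :: s).
  apply/allP => x; rewrite in_cons rootE !hornerE subr_eq0.
  by case/predU1P=> [->|/(allP s_roots)//]; rewrite zd.
have := max_poly_roots Xd_neq0 roots; rewrite /= zs s_uniq size_XnsubC //.
by rewrite s_size ltnn => /(_ isT).
Qed.

Section TwistRoots.

Variables (r n m : nat).
Hypotheses (r_gt0 : (0 < r)%N) (m_gt0 : (0 < m)%N) (nm_coprime : coprime n m).

Local Notation k := (n%:R / m%:R : rat).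
Local Notation N := (lcmn r m %/ r)%N.

Lemma lcm_div_gt0 : (0 < N)%N.
Proof. by rewrite divn_gt0 // dvdn_leq ?lcmn_gt0 ?r_gt0 ?m_gt0 // dvdn_lcml. Qed.

(* [N r k = (lcm r m / m) n] is an integer. *)
Lemma eminus_twist_powN (i : int) : (r%:Z %| i)%Z -> eminus (i%:~R * k) ^+ N = 1.
Proof.
case/dvdzP=> t ->; rewrite -eminusMn; apply/eminus_eq1P.
exists (t * ((lcmn r m %/ m) * n)%:Z).
have lcmE : ((lcmn r m %/ r)%:R * r%:R : rat) = (lcmn r m %/ m)%:R * m%:R.
  by rewrite -!natrM !divnK // ?dvdn_lcml ?dvdn_lcmr.
rewrite !intrM -!pmulrn natrM.
transitivity (t%:~R * ((lcmn r m %/ r)%:R * r%:R) * n%:R / (m%:R : rat)).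
  by field; rewrite pnatr_eq0 -lt0n.
by rewrite lcmE; field; rewrite pnatr_eq0 -lt0n.
Qed.

(* [j r n / m] is an integer only if [m | j r], as [n] and [m] are coprime. *)
Lemma eminus_twist_eq1 (j : nat) : eminus ((j * r)%:R * k) = 1 -> (N %| j)%N.
Proof.
case/eminus_eq1P=> z jrk.
have jrn : ((j * r * n)%N%:Z)%:~R = (z * m%:Z)%:~R :> rat.
  by rewrite intrM -!pmulrn -jrk natrM; field; rewrite pnatr_eq0 -lt0n.
have m_jrn : (m %| j * r * n)%N.
  by have : (m%:Z %| (j * r * n)%N%:Z)%Z by rewrite (intr_inj jrn) dvdz_mull.
have m_jr : (m %| j * r)%N.
  by rewrite -(Gauss_dvdr _ (_ : coprime m n)) 1?coprime_sym // mulnC.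
by rewrite -(dvdn_pmul2r r_gt0) divnK ?dvdn_lcml // dvdn_lcm m_jr dvdn_mull.
Qed.

Lemma uniq_twists : uniq [seq eminus ((j * r)%:R * k) | j <- iota 0 N].
Proof.
rewrite map_inj_in_uniq ?iota_uniq // => j1 j2.
wlog j12 : j1 j2 / (j1 <= j2)%N => [sym|].
  by case: (leqP j1 j2) => [|/ltnW] j12 ? ? ?; [exact: sym | apply/esym/sym].
rewrite !mem_iota !add0n => /andP[_ j1N] /andP[_ j2N] same.
have : eminus (((j2 - j1) * r)%:R * k) = 1.
  by rewrite mulnBl natrB ?leq_mul2r ?j12 ?orbT // mulrBl eminusD -same mulrC eminusN.
move/eminus_twist_eq1/dvdn_leq; case: (ltngtP j1 j2) j12 => //= j12 _.
by rewrite subn_gt0 => /(_ j12); lia.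
Qed.

Lemma twist_rootP (a ah : C) : a != 0 ->
  (exists i : int, (r%:Z %| i)%Z /\ ah = a * eminus (i%:~R * k)) <-> a ^+ N = ah ^+ N.
Proof.
move=> a0; split=> [[i [ri ->]]|aN_ahN].
  by rewrite exprMn eminus_twist_powN ?mulr1.
have : ah / a \in [seq eminus ((j * r)%:R * k) | j <- iota 0 N].
  apply: (mem_unity_roots lcm_div_gt0 uniq_twists); first by rewrite size_map size_iota.
    apply/allP => _ /mapP[j _ ->]; apply/eqP.
    have /eminus_twist_powN : (r%:Z %| (j * r)%N%:Z)%Z by rewrite PoszM dvdz_mull.
    exact.
  by rewrite exprMn exprVn -aN_ahN mulfV // expf_neq0.
case/mapP => j _ ah_j; exists (j * r)%:Z; split; first by rewrite PoszM dvdz_mull.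
by rewrite -[_%:~R]/((j * r)%:R : rat) -ah_j mulrC divfK.
Qed.

End TwistRoots.

Lemma coef_layered (qc b : EF) (k : rat) (a : C) :
  (forall e, inExps qc e -> k < e) -> slope b < k ->
  [/\ forall e, k < e -> coef (qc ++ (k, a) :: b) e = coef qc e,
      coef (qc ++ (k, a) :: b) k = a &
      forall e, e < k -> coef (qc ++ (k, a) :: b) e = coef b e].
Proof.
move=> qc_gt slope_b.
have qc0 e : e <= k -> coef qc e = 0.
  by move=> ek; apply/eqP; apply: contraTT ek => /qc_gt; rewrite -ltNge.
have b0 e : k <= e -> coef b e = 0.
  move=> ke; apply/eqP; apply: contraTT ke => /slope_ge eb.
  by rewrite -ltNge (le_lt_trans eb slope_b).
split=> [e ke||e ek]; rewrite coef_cat coef_cons.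
- by rewrite (lt_eqF ke) b0 ?(ltW ke) // !addr0.
- by rewrite eqxx qc0 // b0 // add0r addr0.
- by rewrite (gt_eqF ek) qc0 ?(ltW ek) // !add0r.
Qed.

Lemma powN_neq_cases (F : idomainType) (d : nat) (x y : F) : (0 < d)%N ->
  (x ^+ d != y ^+ d) = ((x == 0) (+) (y == 0)) || [&& x != 0, y != 0 & x ^+ d != y ^+ d].
Proof.
move=> d_gt0; have zero_pow : (0 : F) ^+ d = 0 by rewrite expr0n gtn_eqF.
case: (eqVneq x 0) => [->|x0]; case: (eqVneq y 0) => [->|y0] //=; rewrite ?eqxx //.
- by rewrite zero_pow eq_sym expf_neq0.
- by rewrite zero_pow expf_neq0.
Qed.

Section LayeredFactors.

Variables (n m r : nat) (qc b bh : EF) (a ah : C).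
Hypotheses (n_gt0 : (0 < n)%N) (m_gt0 : (0 < m)%N) (nm_coprime : coprime n m).
Hypotheses (qc_gt : forall e, inExps qc e -> (n%:R / m%:R : rat) < e).
Hypothesis qc_ram : is_ram qc r.
Hypotheses (slope_b : slope b < n%:R / m%:R) (slope_bh : slope bh < n%:R / m%:R).

Local Notation k := (n%:R / m%:R : rat).
Local Notation N := (lcmn r m %/ r)%N.
Local Notation q := (qc ++ (k, a) :: b).
Local Notation qh := (qc ++ (k, ah) :: bh).

Let k_gt0 : 0 < k. Proof. by rewrite divr_gt0 ?ltr0n. Qed.
Let r_gt0 : (0 < r)%N. Proof. by case: qc_ram. Qed.
Let N_gt0 : (0 < N)%N := lcm_div_gt0 r_gt0 m_gt0.
Let coef_q := coef_layered a qc_gt slope_b.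
Let coef_qh := coef_layered ah qc_gt slope_bh.

(* A twist of the part of [q] above [k] onto that of [qh] must fix [qc],
   hence is by a multiple of [r], and it multiplies [a] by an [N]-th root of unity. *)
Lemma powN_eq_of_twist (i : int) :
  (forall e, k <= e -> coef qh e = coef q e * eminus (i%:~R * e)) -> a ^+ N = ah ^+ N.
Proof.
move=> twist; have [q_gt q_k _] := coef_q; have [qh_gt qh_k _] := coef_qh.
have ri : (r%:Z %| i)%Z.
  apply/(ram_twistP _ qc_ram) => e qce; have ke := qc_gt qce.
  apply: (mulfI qce); rewrite mulr1 -(q_gt _ ke) -twist ?(ltW ke) //.
  by rewrite qh_gt ?q_gt.
by rewrite -qh_k twist // q_k exprMn eminus_twist_powN ?mulr1.
Qed.

Lemma circle_trunc_k (i : int) : (r%:Z %| i)%Z -> ah = a * eminus (i%:~R * k) ->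
  circle (trunc k q) = circle (trunc k qh).
Proof.
move=> ri ah_twist; have [q_gt q_k _] := coef_q; have [qh_gt qh_k _] := coef_qh.
apply/circle_eqP; exists i; apply: funext => e.
rewrite sigmazE !coef_trunc; case: ifP => [|_]; last by rewrite mul0r.
rewrite le_eqVlt => /predU1P[<-|ke]; first by rewrite q_k qh_k.
rewrite q_gt ?qh_gt //; have [qce|qce] := eqVneq (coef qc e) 0.
  by rewrite qce mul0r.
by rewrite (ram_twistP _ qc_ram).2 ?mulr1.
Qed.

Lemma qc_exps_common (e : rat) : inExps qc e -> e \in common_exps q qh.
Proof.
move=> qce; have [q_gt _ _] := coef_q; have [qh_gt _ _] := coef_qh.
have ke := qc_gt qce.
apply/common_expsP; split; first by rewrite /inExps q_gt.
apply/circle_eqP; exists 0; apply: funext => e'; rewrite sigmazE mul0r eminus0 mulr1.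
rewrite !coef_trunc; case: ifP => // ee'.
by rewrite q_gt ?qh_gt // (lt_le_trans ke ee').
Qed.

(* If [a^N = ah^N] with [a != 0], the truncations at [k] already lie on the same
   Stokes circle, so the fission exponent drops below [k]. *)
Lemma powN_neq_of_fission_eq : fission q qh = k -> a ^+ N != ah ^+ N.
Proof.
move=> fk; apply/negP => /eqP aN_ahN; have [_ q_k _] := coef_q; have [_ qh_k _] := coef_qh.
have := @fission_inExps q qh; rewrite fk => /(_ k_gt0).
rewrite /inExps q_k qh_k; have [a0 /= ah0|a0 _] := eqVneq a 0.
  by move/eqP: aN_ahN; rewrite a0 expr0n gtn_eqF // eq_sym expf_eq0 (negPf ah0) andbF.
have [i [ri ah_twist]] := (twist_rootP r_gt0 m_gt0 nm_coprime ah a0).2 aN_ahN.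
have kc : k \in common_exps q qh.
  by apply/common_expsP; split; [rewrite /inExps q_k | exact: circle_trunc_k ah_twist].
by move: (fission_lt k_gt0 kc (lexx k)); rewrite fk ltxx.
Qed.

Lemma separated_of_powN_neq :
  a ^+ N != ah ^+ N -> circle q <> circle qh /\ fission q qh = k.
Proof.
move=> aN_ahN; have [q_gt q_k _] := coef_q; have [qh_gt qh_k _] := coef_qh.
split.
  case/circle_eqP => i twist; move: aN_ahN; rewrite (powN_eq_of_twist (i := i)) ?eqxx //.
  by move=> e _; rewrite twist sigmazE.
apply: fission_eq => //.
- move=> t /common_expsP[_ /circle_eqP[i twist]]; rewrite ltNge; apply/negP => tk.
  move: aN_ahN; rewrite (powN_eq_of_twist (i := i)) ?eqxx // => e ke.
  by move: (congr1 (fun f => f e) twist); rewrite sigmazE !coef_trunc (le_trans tk ke).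
- by move=> e ke; rewrite /inExps q_gt //; apply: qc_exps_common.
- by move=> e ke; rewrite /inExps qh_gt //; apply: qc_exps_common.
- rewrite /inExps q_k qh_k; apply: contraR aN_ahN; rewrite negb_or !negbK.
  by case/andP => /eqP-> /eqP->.
Qed.

Lemma separated_iff_powN_neq :
  (circle q <> circle qh /\ fission q qh = k) <-> a ^+ N != ah ^+ N.
Proof. by split=> [[_ /powN_neq_of_fission_eq]|/separated_of_powN_neq]. Qed.

End LayeredFactors.

Theorem mainTheorem6 (n m : nat) (qc b bh : EF) (a ah : C) (r : nat) :
  (0 < n)%N -> (0 < m)%N -> coprime n m ->
  ef_ok qc -> ef_ok b -> ef_ok bh ->
  (forall e, inExps qc e -> (n%:R / m%:R : rat) < e) ->
  is_ram qc r ->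
  slope b < n%:R / m%:R -> slope bh < n%:R / m%:R ->
  let k : rat := n%:R / m%:R in
  let q : EF := qc ++ (k, a) :: b in
  let qh : EF := qc ++ (k, ah) :: bh in
  let N : nat := (lcmn r m %/ r)%N in
  (circle q <> circle qh /\ fission q qh = k) <->
  (((m %| r)%N /\ a != ah) \/
   (~~ (m %| r)%N /\
     (((a == 0) (+) (ah == 0)) \/ [/\ a != 0, ah != 0 & a ^+ N != ah ^+ N]))).
Proof.
move=> n_gt0 m_gt0 nm_coprime _ _ _ qc_gt qc_ram slope_b slope_bh k q qh N.
have r_gt0 : (0 < r)%N by case: qc_ram.
have sep := separated_iff_powN_neq a ah n_gt0 m_gt0 nm_coprime qc_gt qc_ram slope_b slope_bh.
apply: iff_trans sep _.
rewrite -/N; have [m_r|m_r] := boolP (m %| r)%N.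
  have -> : N = 1%N by rewrite /N (lcmn_idPl m_r) divnn r_gt0.
  by rewrite !expr1; split=> [?|[[]|[]]] //; left.
rewrite {1}(powN_neq_cases _ _ (lcm_div_gt0 r_gt0 m_gt0)).
split=> [|[[//]|[_ [a_xor_ah|[a0 ah0 aN]]]]].
- by case/orP=> [?|/and3P ?]; right; split=> //; [left | right].
- by rewrite a_xor_ah.
- by rewrite a0 ah0 aN orbT.
Qed.
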